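(* Let $q$ be an odd prime power with $q\equiv2\pmod 3$, let $m,n$ be positive integers, let $\omega\in\mathbb{F}_{q^2}$ be an element of multiplicative order $3$, and let $\varepsilon\in\mathbb{F}_q^*\cup\{\pm\omega,\pm\omega^2\}$. Then $$f(x)=(x+x^q)^m+\varepsilon(x-\omega x^q)^n$$ is a permutation polynomial of $\mathbb{F}_{q^2}$ if and only if $\gcd(mn,q-1)=1$.
   Context: A polynomial is a permutation polynomial of $\mathbb{F}_{q^2}$ if the map it induces on $\mathbb{F}_{q^2}$ is bijective. *)

From mathcomp Require Import all_boot all_algebra all_field.
Set Implicit Arguments. Unset Strict Implicit. Unset Printing Implicit Defensive.
Import GRing.Theory.
Local Open Scope ring_scope.

Definition prime_power (q : nat) : Prop :=
  exists p k : nat, prime p /\ (0 < k)%N /\ q = (p ^ k)%N.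

Definition fmap35 (F : finFieldType) (q m n : nat) (w eps : F) (x : F) : F :=
  (x + x ^+ q) ^+ m + eps * (x - w * x ^+ q) ^+ n.

Definition is_permutation (F : finFieldType) (f : F -> F) : Prop := bijective f.

(** Write [U x = x + x^q] and [V x = x - w x^q] ([trace_q], [skew_q] below),
  so that [f = U^m + eps V^n].
  Both are [F_q]-linear, [x] is recovered from [(U x, V x)], and they take
  values on the "twisted lines" [a^q = a] and [a^q = -w^2 a] respectively.
  On a twisted line [a^q = c a] the power map [a |-> a^e] is injective as soon
  as [e] is coprime to [q - 1].

  If [gcd(mn, q-1) = 1], then [f x = f y] gives
  [U x^m - U y^m = eps (V y^n - V x^n)]; the left side lies on the line with
  twist [1], the right side on one with twist [d (-w^2)^n], where
  [eps^q = d eps] and [d^3 = 1].  As [n] is odd this twist cubes to [-1], so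
  both sides vanish and [x = y].

  Conversely, if a prime [r] divides [mn] and [q - 1], pick [z] of order [r]
  in [F_q^*].  Then [f (z x) = z^m U x^m + eps z^n V x^n], and taking [x] with
  [V x = 0] (if [r | m]) or [U x = 0] (if [r | n]) gives [f (z x) = f x]. *)

From mathcomp Require Import all_boot all_algebra all_field all_fingroup all_solvable.
From mathcomp Require Import ring zify.
Import GRing.Theory.
Local Open Scope ring_scope.
Set Implicit Arguments. Unset Strict Implicit.

Lemma odd_coprime_even (n k : nat) : ~~ odd k -> coprime n k -> odd n.
Proof.
move=> ek; apply: contraLR => en; rewrite /coprime.
have : (2 %| gcdn n k)%N by rewrite dvdn_gcd !dvdn2 en ek.
by apply: contraL => /eqP ->.
Qed.

Section TwistedLine.

Variables (F : fieldType) (q : nat).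
Hypothesis q_gt1 : (1 < q)%N.

Lemma twisted_expS (c z : F) : z ^+ q = c * z ->
  forall t, z ^+ (q.-1 * t + 1) = c ^+ t * z.
Proof.
move=> hz; elim=> [|t IH]; first by rewrite muln0 add0n expr1 expr0 mul1r.
rewrite mulnSr addnAC exprD IH -mulrA -exprS prednK ?(ltnW q_gt1) // hz.
by rewrite exprSr mulrA.
Qed.

Lemma twisted_expr_inj (e : nat) (c a b : F) :
  (0 < e)%N -> coprime e q.-1 -> c != 0 ->
  a ^+ q = c * a -> b ^+ q = c * b -> a ^+ e = b ^+ e -> a = b.
Proof.
move=> e_gt0 co c0 ha hb hab.
have [t _] := Bezoutr q.-1 e_gt0.
rewrite gcdnC (eqP co) => /dvdnP [s hs].
have hs' : (q.-1 * t + 1 = e * s)%N by rewrite addnC mulnC hs mulnC.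
have := twisted_expS hb t; have := twisted_expS ha t.
by rewrite hs' !exprM hab => -> /(mulfI (expf_neq0 t c0)).
Qed.

Lemma twisted_eq0 (c c' a : F) :
  c != c' -> a ^+ q = c * a -> a ^+ q = c' * a -> a = 0.
Proof.
move=> cc' -> /eqP; rewrite -subr_eq0 -mulrBl mulf_eq0 subr_eq0 (negbTE cc').
by move/eqP.
Qed.

End TwistedLine.

Lemma prime_power_gt1 (q : nat) : prime_power q -> (1 < q)%N.
Proof.
by move=> [p [k [pp [k0 ->]]]]; rewrite -[1%N](expn0 p) ltn_exp2l ?prime_gt1.
Qed.

Definition trace_q (R : nzRingType) (q : nat) (x : R) : R := x + x ^+ q.
Definition skew_q (R : nzRingType) (q : nat) (w x : R) : R := x - w * x ^+ q.

Lemma fmap35E (F : finFieldType) (q m n : nat) (w eps x : F) :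
  fmap35 q m n w eps x = trace_q q x ^+ m + eps * skew_q q w x ^+ n.
Proof. by []. Qed.

Lemma fmap35_scale (F : finFieldType) (q m n : nat) (w eps z x : F) :
  z ^+ q = z ->
  fmap35 q m n w eps (z * x) =
    z ^+ m * trace_q q x ^+ m + eps * (z ^+ n * skew_q q w x ^+ n).
Proof.
move=> hz; rewrite fmap35E /trace_q /skew_q exprMn hz -!exprMn.
by congr (_ ^+ _ + eps * _ ^+ _); ring.
Qed.

Section Frobenius.

Variables (F : finFieldType) (q : nat).
Hypotheses (pq : prime_power q) (cardF : #|F| = (q ^ 2)%N).

Lemma card_pchar : exists p k, [/\ p \in [pchar F], (0 < k)%N & q = (p ^ k)%N].
Proof.
have [p [k [pp [k0 qE]]]] := pq; exists p, k; split=> //.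
by apply: (@card_finPcharP F p (k * 2)); rewrite // cardF qE expnM.
Qed.

Lemma exprqD (x y : F) : (x + y) ^+ q = x ^+ q + y ^+ q.
Proof.
have [p [k [cp _ ->]]] := card_pchar; apply: exprDn_pchar.
by rewrite pnatX (eq_pnat _ (pcharf_eq cp)) pnat_id ?orbT ?(pcharf_prime cp).
Qed.

Lemma exprqB (x y : F) : (x - y) ^+ q = x ^+ q - y ^+ q.
Proof. by apply/eqP; rewrite eq_sym subr_eq -exprqD subrK. Qed.

Lemma exprqN (x : F) : (- x) ^+ q = - x ^+ q.
Proof.
by rewrite -sub0r exprqB expr0n gtn_eqF ?sub0r // ltnW ?prime_power_gt1.
Qed.

Lemma exprqK (x : F) : (x ^+ q) ^+ q = x.
Proof. by rewrite -exprM mulnn -cardF expf_card. Qed.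

Lemma odd_pchar_neq2 : odd q -> (2%:R : F) != 0.
Proof.
have [p [k [cp k0 qE]]] := card_pchar => oq.
rewrite -(dvdn_pcharf cp) dvdn_prime2 ?(pcharf_prime cp) //; apply/eqP=> p2.
by move: oq; rewrite qE p2 -(prednK k0) expnS oddM.
Qed.

Lemma fixed_root_of_unity (r : nat) : prime r -> (r %| q.-1)%N ->
  exists z : F, [/\ z ^+ q = z, z ^+ r = 1 & z != 1].
Proof.
move=> pr rq; have q_gt1 := prime_power_gt1 pq.
have rG : (r %| #|[set: {unit F}]|)%N.
  rewrite card_finField_unit cardF; apply: dvdn_trans rq _.
  by apply/dvdnP; exists q.+1; rewrite -mulnn; lia.
have [u _ ou] := Cauchy pr rG; exists (val u).
have ur : val u ^+ r = 1 by rewrite -FinRing.val_unitX -ou expg_order.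
split=> //.
- have [j hj] := dvdnP rq; rewrite -(prednK (ltnW q_gt1)) exprS hj.
  by rewrite exprM exprAC ur expr1n mulr1.
- apply/eqP => u1; have {}u1 : u = 1%g by apply: val_inj.
  by move: pr; rewrite -ou u1 order1.
Qed.

Section PrimitiveCubeRoot.

Variable w : F.
Hypotheses (q_mod3 : (q %% 3 = 2)%N) (w3 : w ^+ 3 = 1) (w_neq1 : w != 1).

Lemma exprq_w : w ^+ q = w ^+ 2.
Proof.
by rewrite (divn_eq q 3) q_mod3 exprD exprM exprAC w3 expr1n mul1r.
Qed.

Lemma exprw4 : w ^+ 2 * w ^+ 2 = w.
Proof. by rewrite -exprD (_ : (2 + 2 = 3 + 1)%N) // exprD w3 mul1r. Qed.

Lemma exprq_w2 : (w ^+ 2) ^+ q = w.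
Proof. by rewrite exprAC exprq_w expr2 exprw4. Qed.

Lemma w_neq0 : w != 0.
Proof. by apply: contra_eq_neq w3 => ->; rewrite expr0n eq_sym oner_neq0. Qed.

Lemma cube_root_sum : 1 + w + w ^+ 2 = 0.
Proof.
have : (w - 1) * (1 + w + w ^+ 2) = 0.
  by rewrite -[0](subrr 1) -[X in _ = X - _]w3; ring.
by move/eqP; rewrite mulf_eq0 subr_eq0 (negbTE w_neq1) => /eqP.
Qed.

Lemma trace_q_fixed (x : F) : trace_q q x ^+ q = trace_q q x.
Proof. by rewrite /trace_q exprqD exprqK addrC. Qed.

Lemma skew_q_twisted (x : F) : skew_q q w x ^+ q = - w ^+ 2 * skew_q q w x.
Proof.
rewrite /skew_q exprqB exprMn exprq_w exprqK.
have -> : - w ^+ 2 * (x - w * x ^+ q) = x ^+ q * w ^+ 3 - w ^+ 2 * x by ring.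
by rewrite w3 mulr1.
Qed.

(* [(1 + w) x^q = U x - V x], and [1 + w = - w^2] is invertible. *)
Lemma trace_skew_inj (x y : F) :
  trace_q q x = trace_q q y -> skew_q q w x = skew_q q w y -> x = y.
Proof.
move=> eU eV; have w1_neq0 : 1 + w != 0.
  have -> : 1 + w = - w ^+ 2 by apply/eqP; rewrite -subr_eq0 opprK cube_root_sum.
  by rewrite oppr_eq0 expf_neq0 ?w_neq0.
have eq : x ^+ q = y ^+ q.
  have UV t : (1 + w) * t ^+ q = trace_q q t - skew_q q w t.
    by rewrite /trace_q /skew_q; ring.
  by apply: (mulfI w1_neq0); rewrite !UV eU eV.
by move: eU; rewrite /trace_q eq => /addIr.
Qed.

Lemma skew_q_w2 : skew_q q w (w ^+ 2) = 0.
Proof. by rewrite /skew_q exprq_w2 -expr2 subrr. Qed.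

Lemma trace_q_w_sub_w2 : trace_q q (w - w ^+ 2) = 0.
Proof. by rewrite /trace_q exprqB exprq_w exprq_w2; ring. Qed.

Lemma w_sub_w2_neq0 : w - w ^+ 2 != 0.
Proof.
have -> : w - w ^+ 2 = w * (1 - w) by ring.
by rewrite mulf_neq0 ?w_neq0 // subr_eq0 eq_sym.
Qed.

Lemma fmap35_not_injective (m n : nat) (eps : F) (r : nat) :
  (0 < m)%N -> (0 < n)%N -> prime r -> (r %| m * n)%N -> (r %| q.-1)%N ->
  ~ injective (fmap35 q m n w eps).
Proof.
move=> m0 n0 pr rmn rq finj.
have [z [zq zr z1]] := fixed_root_of_unity pr rq.
have collide x : x != 0 -> fmap35 q m n w eps (z * x) = fmap35 q m n w eps x -> False.
  move=> x0 /finj zx; move/eqP: z1; apply.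
  by apply: (mulIf x0); rewrite mul1r.
have zpow k : (r %| k)%N -> z ^+ k = 1.
  by case/dvdnP=> j ->; rewrite exprM exprAC zr expr1n.
move: rmn; rewrite Euclid_dvdM // => /orP [/zpow zm | /zpow zn].
- apply: (collide (w ^+ 2)); first by rewrite expf_neq0 ?w_neq0.
  rewrite fmap35_scale // zm mul1r fmap35E skew_q_w2.
  by rewrite expr0n eqn0Ngt n0 !mulr0.
- apply: (collide (w - w ^+ 2) w_sub_w2_neq0).
  rewrite fmap35_scale // zn mul1r fmap35E trace_q_w_sub_w2.
  by rewrite expr0n eqn0Ngt m0 !mulr0.
Qed.

Lemma eps_twisted (eps : F) :
  (eps != 0 /\ eps ^+ q = eps) \/
    eps = w \/ eps = - w \/ eps = w ^+ 2 \/ eps = - w ^+ 2 ->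
  exists d : F, [/\ d ^+ 3 = 1, eps ^+ q = d * eps & eps != 0].
Proof.
have w23 : (w ^+ 2) ^+ 3 = 1 by rewrite exprAC w3 expr1n.
have w0 := w_neq0; have w20 : w ^+ 2 != 0 by rewrite expf_neq0.
case=> [[e0 epsq] | [-> | [-> | [-> | ->]]]].
- by exists 1; rewrite expr1n mul1r.
- by exists w; rewrite exprq_w expr2.
- by exists w; rewrite exprqN exprq_w expr2 mulrN oppr_eq0.
- by exists (w ^+ 2); rewrite exprq_w2 exprw4.
- by exists (w ^+ 2); rewrite exprqN exprq_w2 mulrN exprw4 oppr_eq0.
Qed.

Lemma twist_neq1 (d : F) (n : nat) :
  odd q -> odd n -> d ^+ 3 = 1 -> d * (- w ^+ 2) ^+ n != 1.
Proof.
move=> oq on d3; apply/eqP => t1.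
have c3 : (- w ^+ 2) ^+ 3 = -1.
  by rewrite exprNn exprAC w3 expr1n mulr1 -signr_odd /= expr1.
have : (d * (- w ^+ 2) ^+ n) ^+ 3 = -1.
  by rewrite exprMn d3 mul1r exprAC c3 -signr_odd on expr1.
rewrite t1 expr1n => /eqP; rewrite -subr_eq0 opprK -mulr2n.
by rewrite (negbTE (odd_pchar_neq2 oq)).
Qed.

Lemma fmap35_injective (m n : nat) (eps d : F) :
  odd q -> (0 < m)%N -> (0 < n)%N -> coprime (m * n) q.-1 ->
  d ^+ 3 = 1 -> eps ^+ q = d * eps -> eps != 0 ->
  injective (fmap35 q m n w eps).
Proof.
move=> oq m0 n0; rewrite coprimeMl => /andP [cm cn] d3 epsq eps0 x y.
have q_gt1 := prime_power_gt1 pq.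
have on : odd n.
  apply: (odd_coprime_even _ cn).
  by rewrite -(prednK (ltnW q_gt1)) /= in oq.
rewrite !fmap35E => hxy.
set A := trace_q q x ^+ m - trace_q q y ^+ m.
set B := skew_q q w y ^+ n - skew_q q w x ^+ n.
have AB : A = eps * B.
  apply/eqP; rewrite -subr_eq0.
  have -> : A - eps * B =
      (trace_q q x ^+ m + eps * skew_q q w x ^+ n) -
      (trace_q q y ^+ m + eps * skew_q q w y ^+ n) by rewrite /A /B; ring.
  by rewrite hxy subrr.
have hA : A ^+ q = 1 * A.
  by rewrite mul1r exprqB -!exprM !(mulnC m) !exprM !trace_q_fixed.
have hB : B ^+ q = (- w ^+ 2) ^+ n * B.
  by rewrite exprqB -!exprM !(mulnC n) !exprM !skew_q_twisted !exprMn mulrBr.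
have A0 : A = 0.
  apply: (twisted_eq0 (twist_neq1 oq on d3) _ hA).
  by rewrite {1}AB exprMn epsq hB AB; ring.
have B0 : B = 0.
  by apply/eqP; move: A0; rewrite AB => /eqP; rewrite mulf_eq0 (negbTE eps0).
have c0 : - w ^+ 2 != 0 by rewrite oppr_eq0 expf_neq0 ?w_neq0.
apply: trace_skew_inj.
- apply: (twisted_expr_inj q_gt1 m0 cm (oner_neq0 F));
    rewrite ?trace_q_fixed ?mul1r //.
  exact: subr0_eq.
- apply: (twisted_expr_inj q_gt1 n0 cn c0 (skew_q_twisted x) (skew_q_twisted y)).
  by apply/esym/subr0_eq.
Qed.

End PrimitiveCubeRoot.

End Frobenius.

Theorem proposition3p5 (F : finFieldType) (q m n : nat) (w eps : F) :
  prime_power q -> odd q -> (q %% 3 = 2)%N ->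
  #|F| = (q ^ 2)%N ->
  (0 < m)%N -> (0 < n)%N ->
  w ^+ 3 = 1 -> w != 1 ->
  (eps != 0 /\ eps ^+ q = eps) \/
    eps = w \/ eps = - w \/ eps = w ^+ 2 \/ eps = - w ^+ 2 ->
  (is_permutation (fmap35 q m n w eps) <-> gcdn (m * n) q.-1 = 1%N).
Proof.
move=> pq oq q3 cardF m0 n0 w3 w1 heps; split.
- move=> /bij_inj finj; apply/eqP/negPn/negP => g1.
  have g_gt1 : (1 < gcdn (m * n) q.-1)%N.
    by rewrite ltn_neqAle eq_sym g1 gcdn_gt0 muln_gt0 m0 n0.
  have [r pr] := pdivP g_gt1; rewrite dvdn_gcd => /andP [rmn rq].
  exact: (fmap35_not_injective pq cardF q3 w3 w1 m0 n0 pr rmn rq finj).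
- move=> /eqP g1; apply: injF_bij.
  have [d [d3 epsq eps0]] := eps_twisted pq cardF q3 w3 heps.
  exact: (fmap35_injective pq cardF q3 w3 w1 oq m0 n0 g1 d3 epsq eps0).
Qed.
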